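(* Let $\sigma=\{\sigma_z\}_{z\in\mathbb{Z}}$ be i.i.d. strictly positive random variables with law $\mathbf{P}$, with $L(x):=1/\mathbf{P}(\sigma_0>x)$ slowly varying at infinity (i.e. $\lim_{u\to\infty}L(uv)/L(u)=1$ for every $v>0$). Let $h_t$ be any function with $h_t\to\infty$, $h_t^2=o(r_t)$, and such that, for all sufficiently large $t$, \[ L(\ell_t/h_t^3)>L(\ell_t)(1-1/h_t)\quad\text{and}\quad L(\ell_th_t^3)<L(\ell_t)(1+1/h_t).\] Then $\mathbf{P}(\mathcal{B}^h_t)\to1$ as $t\to\infty$, where $\mathcal{B}^h_t:=\{m_t>th_t^2/r_t\}$.
   Context: $\ell_t:=\min\{s\ge0: sL(s)\ge t\}$, $r_t:=L(\ell_t)$, $Z^{(1)}_t:=\min\{z\in\mathbb{Z}^+:\sigma_z>\ell_t\}$, $Z^{(2)}_t:=\max\{z\in\mathbb{Z}^-:\sigma_z>\ell_t\}$ (with $\mathbb{Z}^+$ the positive and $\mathbb{Z}^-$ the non-positive integers), $\Gamma_t:=\{Z^{(1)}_t,Z^{(2)}_t\}$ and $m_t:=\min_{z\in\Gamma_t}\sigma_z$. *)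

From HB Require Import structures.
From mathcomp Require Import all_boot all_order all_algebra.
From mathcomp Require Import all_classical all_reals all_analysis.
Set Implicit Arguments. Unset Strict Implicit. Unset Printing Implicit Defensive.
Import Order.TTheory GRing.Theory Num.Theory.
Import numFieldNormedType.Exports.
Local Open Scope classical_set_scope.
Local Open Scope ring_scope.

Section Defs.
Context {d : measure_display} {Omega : measurableType d} {R : realType}
  {P : probability Omega R}.

Definition mutually_independent (X : int -> {RV P >-> R}) : Prop :=
  forall (s : seq int) (B : int -> set R),
    uniq s -> (forall i, measurable (B i)) ->
    P (\big[setI/setT]_(i <- s) (X i @^-1` B i)) =
    (\prod_(i <- s) P (X i @^-1` B i))%E.

Definition identically_distributed (X : int -> {RV P >-> R}) : Prop :=
  forall (z : int) (B : set R), measurable B ->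
    P (X z @^-1` B) = P (X 0 @^-1` B).

Definition pos_as (X : int -> {RV P >-> R}) : Prop :=
  forall z : int, P [set w | X z w <= 0] = 0%E.

Definition Ltail (X : int -> {RV P >-> R}) (x : R) : R :=
  (fine (P [set w | x < X 0 w]))^-1.

Definition slowly_varying (L : R -> R) : Prop :=
  forall v : R, 0 < v -> (fun u => L (u * v) / L u) @ +oo --> (1 : R).

(* ell_t := min { s >= 0 : s L(s) >= t } (the minimum exists; we take the inf) *)
Definition ell (L : R -> R) (t : R) : R :=
  inf [set s : R | 0 <= s /\ t <= s * L s].

Definition rfun (L : R -> R) (t : R) : R := L (ell L t).

Definition isZ1 (X : int -> {RV P >-> R}) (t : R) (w : Omega) (z : int) : Prop :=
  (0 < z)%R /\ ell (Ltail X) t < X z w /\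
  (forall y : int, (0 < y)%R -> (y < z)%R -> X y w <= ell (Ltail X) t).

Definition isZ2 (X : int -> {RV P >-> R}) (t : R) (w : Omega) (z : int) : Prop :=
  (z <= 0)%R /\ ell (Ltail X) t < X z w /\
  (forall y : int, (z < y)%R -> (y <= 0)%R -> X y w <= ell (Ltail X) t).

(* B^h_t := { m_t > t h_t^2 / r_t },  m_t := min(sigma_{Z1}, sigma_{Z2}) *)
Definition eventB (X : int -> {RV P >-> R}) (h : R -> R) (t : R) : set Omega :=
  [set w | exists z1 z2 : int, isZ1 X t w z1 /\ isZ2 X t w z2 /\
     t * h t ^+ 2 / rfun (Ltail X) t < Num.min (X z1 w) (X z2 w)].

End Defs.

(* Put a = ell_t and b = a h_t^3. Scanning the sites 1, 2, ... (resp. 0, -1, ...),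
   the first value above a sits at Z^(1)_t (resp. Z^(2)_t); by independence its
   position is geometric, and the conditional probability that this value even
   exceeds b is P(sigma_0 > b) / P(sigma_0 > a) = L(a) / L(b) > 1 / (1 + 1/h_t).
   On both of these events m_t > b, and b dominates the threshold t h_t^2 / r_t since
   t <= 2a L(2a) <= 2a L(b) < 2a L(a) (1 + 1/h_t).  Hence
   P(B^h_t) >= 2 / (1 + 1/h_t) - 1 -> 1. *)

From HB Require Import structures.
From mathcomp Require Import all_boot all_order all_algebra.
From mathcomp Require Import all_classical all_reals all_analysis.
From mathcomp Require Import ring lra zify.
Set Implicit Arguments. Unset Strict Implicit. Unset Printing Implicit Defensive.
Import Order.TTheory GRing.Theory Num.Theory.
Import numFieldNormedType.Exports.
Local Open Scope classical_set_scope.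
Local Open Scope ring_scope.

Lemma le_of_forall_sub_geometric (R : realType) (x y c p : R) : 0 <= p < 1 ->
  (forall N, y - c * p ^+ N <= x) -> y <= x.
Proof.
move=> /andP[p0 p1] le_x.
have p_small : `|p| < 1 by rewrite ger0_norm.
have cvg_y : (fun N => y - c * p ^+ N) @ \oo --> y - c * 0.
  by apply: cvgB; [exact: cvg_cst | apply: cvgMr; exact: cvg_expr].
rewrite mulr0 subr0 in cvg_y.
rewrite -(cvg_lim _ cvg_y) //; apply: limr_le; [exact: cvgP cvg_y | exact: nearW].
Qed.

Lemma cvg_2_div_1DV_sub1 (R : realType) (f : R -> R) : f @ +oo --> +oo ->
  (fun t => 2 / (1 + (f t)^-1) - 1) @ +oo --> (1 : R).
Proof.
move=> f_oo; have f_gt0 : \forall t \near +oo, 0 < f t by exact: (cvgryPgt f).1 f_oo 0.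
have inv_f0 : (fun t => (f t)^-1) @ +oo --> (0 : R) by apply/gtr0_cvgV0.
have : (fun t => 2 / (1 + (f t)^-1) - 1) @ +oo --> (2 / (1 + 0) - 1 : R).
  apply: cvgB; last exact: cvg_cst.
  apply: cvgMr; apply: cvgV; first by rewrite addr0 oner_neq0.
  by apply: cvgD; [exact: cvg_cst | exact: inv_f0].
by rewrite addr0 divr1 (_ : 2 - 1 = 1 :> R) //; lra.
Qed.

Section measurable_int_quantifiers.
Context d (T : measurableType d).

Lemma measurable_forall_int (Q : int -> set T) : (forall z, measurable (Q z)) ->
  measurable [set w | forall z, Q z w].
Proof.
move=> mQ.
have -> : [set w | forall z, Q z w] = \bigcap_(k : nat) (Q k%:Z `&` Q (- k%:Z)).
  apply/seteqP; split => w /=.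
  - by move=> Qw k _; split; apply: Qw.
  - move=> Qw [k|k]; first by have [] := Qw k I.
    by rewrite NegzE; have [] := Qw k.+1 I.
by apply: bigcapT_measurable => k; apply: measurableI.
Qed.

Lemma measurable_exists_int (Q : int -> set T) : (forall z, measurable (Q z)) ->
  measurable [set w | exists z, Q z w].
Proof.
move=> mQ.
have -> : [set w | exists z, Q z w] = \bigcup_(k : nat) (Q k%:Z `|` Q (- k%:Z)).
  apply/seteqP; split => w /=.
  - move=> [[k|k] Qw]; first by exists k => //; left.
    by exists k.+1 => //; right; rewrite -NegzE.
  - by move=> [k _ [Qw|Qw]]; eexists; exact: Qw.
by apply: bigcupT_measurable => k; apply: measurableU.
Qed.

Lemma measurable_and_prop (Pr : Prop) (A : set T) : measurable A ->
  measurable [set w | Pr /\ A w].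
Proof.
move=> mA; have [HPr|nPr] := pselect Pr.
- by have -> : [set w | Pr /\ A w] = A by apply/seteqP; split => w /= => [[]|].
- by have -> : [set w | Pr /\ A w] = set0 by apply/seteqP; split => w /= => [[]|].
Qed.

Lemma measurable_imply_prop (Pr : Prop) (A : set T) : measurable A ->
  measurable [set w | Pr -> A w].
Proof.
move=> mA; have [HPr|nPr] := pselect Pr.
- by have -> : [set w | Pr -> A w] = A by apply/seteqP; split => w /= => [/(_ HPr)|] //.
- by have -> : [set w | Pr -> A w] = setT by apply/seteqP; split => // w _ /nPr.
Qed.

End measurable_int_quantifiers.

Lemma measurable_gt (R : realType) (a : R) : measurable [set y : R | a < y].
Proof.
have -> : [set y : R | a < y] = `]a, +oo[%classic.
  by apply/seteqP; split => y /=; rewrite in_itv /= andbT.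
exact: measurable_itv.
Qed.

Lemma measurable_le (R : realType) (a : R) : measurable [set y : R | y <= a].
Proof.
have -> : [set y : R | y <= a] = `]-oo, a]%classic.
  by apply/seteqP; split => y /=; rewrite in_itv.
exact: measurable_itv.
Qed.

Section probability_facts.
Context d (T : measurableType d) (R : realType) (P : probability T R).

Lemma probabilityE A : measurable A -> P A = (fine (P A))%:E.
Proof. by move=> mA; rewrite fineK // fin_num_measure. Qed.

Lemma fine_probability_ge0 A : 0 <= fine (P A).
Proof. exact/fine_ge0/measure_ge0. Qed.

Lemma fine_probability_le1 A : measurable A -> fine (P A) <= 1.
Proof. by move=> mA; rewrite -lee_fin -probabilityE //; exact: probability_le1. Qed.

Lemma le_fine_probability A B : measurable A -> measurable B -> A `<=` B ->
  fine (P A) <= fine (P B).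
Proof.
move=> mA mB AB; rewrite -lee_fin -!probabilityE //.
by apply: le_measure => //; rewrite inE.
Qed.

Lemma fine_probability_setI_ge A B : measurable A -> measurable B ->
  fine (P A) + fine (P B) - 1 <= fine (P (A `&` B)).
Proof.
move=> mA mB.
have mAB := measurableU _ _ mA mB.
have PAB : P (A `|` B) = (P A + P B - P (A `&` B))%E.
  exact/measureUfinr/(le_lt_trans (probability_le1 _ mB) (ltry _)).
rewrite (probabilityE mAB) (probabilityE mA) (probabilityE mB) in PAB.
rewrite (probabilityE (measurableI _ _ mA mB)) in PAB.
have {}PAB : fine (P (A `|` B)) = fine (P A) + fine (P B) - fine (P (A `&` B)).
  exact: EFin_inj.
have := fine_probability_le1 mAB; lra.
Qed.

Lemma measurable_rv_gt (X : {RV P >-> R}) a : measurable [set w | a < X w].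
Proof.
by have := @measurable_funP _ _ _ _ setT X measurableT _ (measurable_gt a); rewrite setTI.
Qed.

Lemma measurable_rv_le (X : {RV P >-> R}) a : measurable [set w | X w <= a].
Proof.
by have := @measurable_funP _ _ _ _ setT X measurableT _ (measurable_le a); rewrite setTI.
Qed.

Lemma fine_probability_rv_le (X : {RV P >-> R}) a :
  fine (P [set w | X w <= a]) = 1 - fine (P [set w | a < X w]).
Proof.
have -> : [set w | X w <= a] = ~` [set w | a < X w].
  by apply/seteqP; split => w /=; rewrite leNgt => /negP.
rewrite probability_setC; last exact: measurable_rv_gt.
by rewrite (probabilityE (measurable_rv_gt X a)).
Qed.

End probability_facts.

Section tail_of_sigma.
Context d (Omega : measurableType d) (R : realType) (P : probability Omega R)
  (sigma : int -> {RV P >-> R}).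

Definition tail (x : R) : R := fine (P [set w | x < sigma 0 w]).

Local Notation L := (Ltail sigma).

Lemma LtailE x : L x = (tail x)^-1.
Proof. by []. Qed.

Lemma tail_le1 x : tail x <= 1.
Proof. exact/fine_probability_le1/measurable_rv_gt. Qed.

Lemma le_tail x y : x <= y -> tail y <= tail x.
Proof.
move=> xy; apply: le_fine_probability; try exact: measurable_rv_gt.
by move=> w /=; apply: le_lt_trans.
Qed.

(* If the tail vanished at x, then L = 0^-1 = 0 beyond x and L(2u)/L(u) would be 0. *)
Lemma slowly_varying_tail_gt0 : slowly_varying L -> forall x, 0 < tail x.
Proof.
move=> sv x; rewrite lt_neqAle fine_probability_ge0 andbT.
apply/negP => /eqP tail_x0.
have tail0 y : x <= y -> tail y = 0.
  move=> xy; apply/eqP; rewrite eq_le fine_probability_ge0 andbT tail_x0.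
  exact: le_tail.
have /cvgrPdist_lt /(_ (1 / 2)) := sv 2 (ltr0Sn _ 1).
move=> /(_ (divr_gt0 ltr01 (ltr0Sn _ 1))) near_ratio.
have [u [ratio_u]] := filter_ex (filterI near_ratio (nbhs_pinfty_gt (num_real (Num.max x 0)))).
rewrite gt_max => /andP[xu u0].
move: ratio_u; rewrite !LtailE (tail0 u (ltW xu)) tail0; last by lra.
by rewrite invr0 mul0r subr0 normr1; lra.
Qed.

Section slowly_varying.
Hypothesis sv : slowly_varying L.

Lemma Ltail_gt0 x : 0 < L x.
Proof. by rewrite LtailE invr_gt0 slowly_varying_tail_gt0. Qed.

Lemma Ltail_ge1 x : 1 <= L x.
Proof. by rewrite LtailE invf_ge1 ?slowly_varying_tail_gt0 ?tail_le1. Qed.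

Lemma le_Ltail x y : x <= y -> L x <= L y.
Proof.
by move=> xy; rewrite !LtailE lef_pV2 ?posrE ?slowly_varying_tail_gt0 ?le_tail.
Qed.

Lemma ell_set_neq0 t : 0 < t -> [set s | 0 <= s /\ t <= s * L s] !=set0.
Proof. by move=> t0; exists t; split; rewrite ?ler_peMr ?Ltail_ge1 ?ltW. Qed.

Lemma le_mulLtail_of_ell_lt t s : 0 < t -> ell L t < s -> t <= s * L s.
Proof.
move=> t0 /(inf_lt (ell_set_neq0 t0)) [y [y0 ty] ys].
apply: (le_trans ty); apply: ler_pM => //; first exact/ltW/Ltail_gt0.
- exact: ltW.
- exact/le_Ltail/ltW.
Qed.

Lemma ell_gt0 t : 0 < t -> 0 < ell L t.
Proof.
move=> t0; have ell_ge0 : 0 <= ell L t.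
  by apply: lb_le_inf; [exact: ell_set_neq0 | move=> s []].
rewrite lt_neqAle ell_ge0 andbT; apply/negP => /eqP ell0.
have L1_gt0 := Ltail_gt0 1.
pose s := Num.min 1 (t / (2 * L 1)).
have s_gt0 : 0 < s by rewrite lt_min ltr01 /= divr_gt0 // mulr_gt0.
have := le_mulLtail_of_ell_lt t0 (_ : ell L t < s); rewrite -ell0 => /(_ s_gt0) ts.
have Ls_le : L s <= L 1 by apply: le_Ltail; rewrite ge_min lexx.
have s_le : s <= t / (2 * L 1) by rewrite ge_min lexx orbT.
have : s * L s <= t / (2 * L 1) * L 1.
  by apply: ler_pM => //; [exact: ltW | exact/ltW/Ltail_gt0].
have -> : t / (2 * L 1) * L 1 = t / 2 by field; rewrite gt_eqF.
lra.
Qed.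

Lemma threshold_le_ell_mulX3 t H : 0 < t -> 3 <= H ->
  L (ell L t * H ^+ 3) < L (ell L t) * (1 + H^-1) ->
  t * H ^+ 2 / rfun L t <= ell L t * H ^+ 3.
Proof.
move=> t0 H3 L_upper; rewrite /rfun.
set a := ell L t in L_upper *; have a0 : 0 < a := ell_gt0 t0.
have La0 := Ltail_gt0 a.
have H0 : 0 < H by lra.
have cube_ge : 27 <= H ^+ 3 by rewrite !exprS expr0 mulr1; nra.
have cubic_ge0 : 0 <= H ^+ 3 - 2 * H ^+ 2 - 2 * H.
  by rewrite !exprS expr0 mulr1; nra.
have t_le : t <= 2 * a * L (2 * a) by apply: le_mulLtail_of_ell_lt; lra.
have L2a_le : L (2 * a) <= L a * (1 + H^-1).
  apply/ltW/(le_lt_trans _ L_upper)/le_Ltail.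
  nra.
rewrite ler_pdivrMr //; apply: (le_trans (ler_wpM2r (exprn_ge0 2 (ltW H0)) t_le)).
have -> : a * H ^+ 3 * L a = 2 * a * (L a * (1 + H^-1)) * H ^+ 2
                            + a * L a * (H ^+ 3 - 2 * H ^+ 2 - 2 * H).
  by field; rewrite gt_eqF.
have : 0 <= a * L a * (H ^+ 3 - 2 * H ^+ 2 - 2 * H) by rewrite !mulr_ge0 // ltW.
have : 2 * a * L (2 * a) * H ^+ 2 <= 2 * a * (L a * (1 + H^-1)) * H ^+ 2.
  by rewrite ler_wpM2r ?exprn_ge0 ?ler_wpM2l ?mulr_ge0 // ltW.
lra.
Qed.

End slowly_varying.
End tail_of_sigma.

Section first_exceedance.
Context d (Omega : measurableType d) (R : realType) (P : probability Omega R)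
  (sigma : int -> {RV P >-> R}).
Hypotheses (indep : mutually_independent sigma) (ident : identically_distributed sigma).

Definition exceed_set (z0 : int) (a b : R) (z : int) : set R :=
  if z == z0 then [set y | b < y] else [set y | y <= a].

(* Along the sites g 0, g 1, ..., the first value above a is at g n and is above b. *)
Definition first_exceedance (g : nat -> int) (a b : R) (n : nat) : set Omega :=
  \big[setI/setT]_(z <- map g (iota 0 n.+1)) (sigma z @^-1` exceed_set (g n) a b z).

Lemma measurable_exceed_set z0 a b z : measurable (exceed_set z0 a b z).
Proof. by rewrite /exceed_set; case: ifP => _; [exact: measurable_gt | exact: measurable_le]. Qed.

Lemma measurable_first_exceedance g a b n : measurable (first_exceedance g a b n).
Proof.
apply: bigsetI_measurable => z _.
have := @measurable_funP _ _ _ _ setT (sigma z) measurableT _ (measurable_exceed_set (g n) a b z).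
by rewrite setTI.
Qed.

Section injective_sites.
Variable g : nat -> int.
Hypothesis ginj : injective g.

Lemma first_exceedanceP a b n w : first_exceedance g a b n w ->
  b < sigma (g n) w /\ forall i, (i < n)%N -> sigma (g i) w <= a.
Proof.
rewrite /first_exceedance -bigcap_seq => exceed_w.
have exceed_at i : (i <= n)%N -> exceed_set (g n) a b (g i) (sigma (g i) w).
  by move=> le_in; apply: exceed_w; apply: map_f; rewrite mem_iota add0n ltnS.
split; first by have := exceed_at n (leqnn n); rewrite /exceed_set eqxx.
move=> i lt_in; have := exceed_at i (ltnW lt_in).
by rewrite /exceed_set (inj_eq ginj) (ltn_eqF lt_in).
Qed.

Lemma trivIset_first_exceedance a b : a < b -> trivIset setT (first_exceedance g a b).
Proof.
move=> ab.
have disj n m w : (n < m)%N ->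
    first_exceedance g a b n w -> first_exceedance g a b m w -> False.
  move=> lt_nm /first_exceedanceP[exceed_n _] /first_exceedanceP[_ /(_ n lt_nm)].
  by move/(lt_le_trans (lt_trans ab exceed_n)); rewrite ltxx.
move=> n m _ _ [w [Fn Fm]]; case: (ltngtP n m) => // lt_nm.
- by case: (disj _ _ _ lt_nm Fn Fm).
- by case: (disj _ _ _ lt_nm Fm Fn).
Qed.

Lemma probability_first_exceedance a b n :
  P (first_exceedance g a b n) = ((1 - tail sigma a) ^+ n * tail sigma b)%:E.
Proof.
rewrite /first_exceedance indep ?map_inj_uniq ?iota_uniq //; last first.
  by move=> z; exact: measurable_exceed_set.
rewrite big_map (eq_bigr (fun i => (if i == n then tail sigma b else 1 - tail sigma a)%:E)).
  rewrite prodEFin -/(index_iota 0 n.+1) big_nat_recr //= eqxx.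
  rewrite (eq_big_nat _ _ (F2 := fun=> 1 - tail sigma a)) ?prodr_const_nat ?subn0 //.
  by move=> i /andP[_ lt_in]; rewrite ltn_eqF.
move=> i _; rewrite ident; last exact: measurable_exceed_set.
rewrite /exceed_set (inj_eq ginj).
case: eqP => _.
  by rewrite /tail -probabilityE //; exact: measurable_rv_gt.
by rewrite /tail -fine_probability_rv_le -probabilityE //; exact: measurable_rv_le.
Qed.

Lemma probability_first_exceedance_before a b N : a < b -> 0 < tail sigma a ->
  fine (P (\big[setU/set0]_(n < N) first_exceedance g a b n)) =
  (1 - (1 - tail sigma a) ^+ N) * (tail sigma b / tail sigma a).
Proof.
move=> ab tail_a0.
rewrite measure_bigsetU //; last exact: trivIset_first_exceedance.
  rewrite (eq_bigr (fun n : 'I_N => ((1 - tail sigma a) ^+ n * tail sigma b)%:E)); last first.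
    by move=> n _; exact: probability_first_exceedance.
  rewrite sumEFin /= -mulr_suml.
  rewrite (_ : 1 - _ ^+ N = tail sigma a * \sum_(n < N) (1 - tail sigma a) ^+ n).
    by field; rewrite lt0r_neq0.
  by rewrite -opprB subrX1; ring.
by move=> n; exact: measurable_first_exceedance.
Qed.

End injective_sites.
End first_exceedance.

Definition right_site (n : nat) : int := n.+1%:Z.
Definition left_site (n : nat) : int := - n%:Z.

Lemma right_site_inj : injective right_site.
Proof. by move=> m n; rewrite /right_site; lia. Qed.

Lemma left_site_inj : injective left_site.
Proof. by move=> m n; rewrite /left_site; lia. Qed.

Section eventB.
Context d (Omega : measurableType d) (R : realType) (P : probability Omega R)
  (sigma : int -> {RV P >-> R}).
Local Notation L := (Ltail sigma).

Lemma measurable_isZ1 t z : measurable [set w | isZ1 sigma t w z].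
Proof.
apply/measurable_and_prop/measurableI; first exact: measurable_rv_gt.
apply: measurable_forall_int => y.
by do 2 apply: measurable_imply_prop; exact: measurable_rv_le.
Qed.

Lemma measurable_isZ2 t z : measurable [set w | isZ2 sigma t w z].
Proof.
apply/measurable_and_prop/measurableI; first exact: measurable_rv_gt.
apply: measurable_forall_int => y.
by do 2 apply: measurable_imply_prop; exact: measurable_rv_le.
Qed.

Lemma measurable_eventB h t : measurable (eventB sigma h t).
Proof.
apply: measurable_exists_int => z1; apply: measurable_exists_int => z2.
apply: measurableI; first exact: measurable_isZ1.
apply: measurableI; first exact: measurable_isZ2.
set c := _ / _.
have : measurable ([set w | c < sigma z1 w] `&` [set w | c < sigma z2 w]).
  by apply: measurableI; exact: measurable_rv_gt.
congr measurable; apply/seteqP; split => w /=; by rewrite lt_min => /andP.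
Qed.

Lemma first_exceedances_sub_eventB h t N b :
  ell L t < b -> t * h t ^+ 2 / rfun L t <= b ->
  (\big[setU/set0]_(n < N) first_exceedance sigma right_site (ell L t) b n) `&`
  (\big[setU/set0]_(n < N) first_exceedance sigma left_site (ell L t) b n)
  `<=` eventB sigma h t.
Proof.
move=> ab cb w; rewrite -!bigcup_mkord => -[[n1 _ F1] [n2 _ F2]].
have [exceed1 below1] := first_exceedanceP right_site_inj F1.
have [exceed2 below2] := first_exceedanceP left_site_inj F2.
exists (right_site n1), (left_site n2); split; [|split].
- split; first by rewrite /right_site; lia.
  split; first exact: lt_trans exceed1.
  move=> y y0 yz; have -> : y = right_site (absz y).-1 by rewrite /right_site; lia.
  by apply: below1; move: yz; rewrite /right_site; lia.
- split; first by rewrite /left_site; lia.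
  split; first exact: lt_trans exceed2.
  move=> y zy y0; have -> : y = left_site (absz y) by rewrite /left_site; lia.
  by apply: below2; move: zy; rewrite /left_site; lia.
- by rewrite lt_min (le_lt_trans cb exceed1) (le_lt_trans cb exceed2).
Qed.

Lemma eventB_ge_Ltail_ratio h t b :
  mutually_independent sigma -> identically_distributed sigma -> slowly_varying L ->
  ell L t < b -> t * h t ^+ 2 / rfun L t <= b ->
  2 * (L (ell L t) / L b) - 1 <= fine (P (eventB sigma h t)).
Proof.
move=> indep ident sv ab cb; set a := ell L t in ab cb *.
have tail_a0 := slowly_varying_tail_gt0 sv a.
have -> : L a / L b = tail sigma b / tail sigma a by rewrite !LtailE invrK mulrC.
have p01 : 0 <= 1 - tail sigma a < 1 by rewrite subr_ge0 tail_le1 ltrBlDr ltrDl.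
apply: (le_of_forall_sub_geometric (c := 2 * (tail sigma b / tail sigma a)) p01) => N.
set U1 := \big[setU/set0]_(n < N) first_exceedance sigma right_site a b n.
set U2 := \big[setU/set0]_(n < N) first_exceedance sigma left_site a b n.
have mU1 : measurable U1 by apply: bigsetU_measurable => n _; exact: measurable_first_exceedance.
have mU2 : measurable U2 by apply: bigsetU_measurable => n _; exact: measurable_first_exceedance.
have := fine_probability_setI_ge P mU1 mU2.
rewrite (probability_first_exceedance_before indep ident right_site_inj) //.
rewrite (probability_first_exceedance_before indep ident left_site_inj) //.
have := le_fine_probability P (measurableI _ _ mU1 mU2) (measurable_eventB h t)
  (@first_exceedances_sub_eventB h t N b ab cb : U1 `&` U2 `<=` _).
set x := tail sigma b / tail sigma a; set y := (1 - tail sigma a) ^+ N.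
lra.
Qed.

Lemma eventB_ge h t :
  mutually_independent sigma -> identically_distributed sigma -> slowly_varying L ->
  0 < t -> 3 <= h t -> L (ell L t * h t ^+ 3) < L (ell L t) * (1 + (h t)^-1) ->
  2 / (1 + (h t)^-1) - 1 <= fine (P (eventB sigma h t)).
Proof.
move=> indep ident sv t0 h3 L_upper; set a := ell L t in L_upper *.
have a0 : 0 < a := ell_gt0 sv t0.
have ab : a < a * h t ^+ 3 by rewrite ltr_pMr // !exprS expr0 mulr1; nra.
apply: le_trans (eventB_ge_Ltail_ratio indep ident sv ab
                   (threshold_le_ell_mulX3 sv t0 h3 L_upper)).
have Lb0 := Ltail_gt0 sv (a * h t ^+ 3).
have k0 : 0 < 1 + (h t)^-1 by rewrite ltr_wpDr ?invr_ge0 //; lra.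
by rewrite lerD2r ler_pM2l // ler_pdivlMr // mulrC ler_pdivrMr // ltW.
Qed.

End eventB.

Theorem proposition3p10 (d : measure_display) (Omega : measurableType d)
  (R : realType) (P : probability Omega R) (sigma : int -> {RV P >-> R})
  (h : R -> R) :
  mutually_independent sigma ->
  identically_distributed sigma ->
  pos_as sigma ->
  slowly_varying (Ltail sigma) ->
  h @ +oo --> +oo ->
  (fun t => h t ^+ 2 / rfun (Ltail sigma) t) @ +oo --> (0 : R) ->
  (\forall t \near +oo,
      Ltail sigma (ell (Ltail sigma) t / h t ^+ 3)
        > Ltail sigma (ell (Ltail sigma) t) * (1 - (h t)^-1) /\
      Ltail sigma (ell (Ltail sigma) t * h t ^+ 3)
        < Ltail sigma (ell (Ltail sigma) t) * (1 + (h t)^-1)) ->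
  (fun t => fine (P (eventB sigma h t))) @ +oo --> (1 : R).
Proof.
move=> indep ident _ sv h_oo _ L_bounds.
apply: (squeeze_cvgr _ (cvg_2_div_1DV_sub1 h_oo) (cvg_cst (1 : R))).
near=> t.
apply/andP; split; last exact/fine_probability_le1/measurable_eventB.
apply: (eventB_ge indep ident sv).
- by near: t; exact: (nbhs_pinfty_gt (num_real (0 : R))).
- by apply/ltW; near: t; exact: (cvgryPgt h).1 h_oo 3.
- by near: t; apply: filterS L_bounds => ? [].
Unshelve. all: by end_near.
Qed.
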